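(* Let $S=\bigwedge W$. Assume $W$ is finite-dimensional with $\dim W\ge 2$, and let \[ \Lambda:\operatorname{GL}(W)\hookrightarrow \mathrm{SO}(\mathrm{Hyp}(W)) \] denote the transported Levi embedding $\Lambda(g)=(g^{-{\vee}},g)$. If $g\in \operatorname{GL}(W)$ has $\det(g)=u^2$ for some $u\in K^\times$, then, after choosing a basis $e_1,\ldots,e_n$, there are finite products $A$ and $B$ of elementary basis transvections and units $t_2,\ldots,t_n\in K^\times$ such that \[ g=A\,L_1(u^2)\,\prod_{j=2}^{n}D_{j1}(t_j)\,B. \] Here $L_1(u^2)$ scales $e_1$ by $u^2$ and fixes the other basis vectors, while $D_{j1}(t_j)$ scales $e_j$ by $t_j$, scales $e_1$ by $t_j^{-1}$, and fixes the remaining basis vectors. Applying $\Lambda$, each elementary transvection factor is a transported hyperbolic transvection and each $D_{j1}(t_j)$ is a product of four such transvections. Thus $\Lambda(g)$ is a product of transported hyperbolic transvections and one chosen-line square scaling. Moreover, the factors admit explicit Clifford representatives whose product is an even unitary Clifford unit \[ x\in \mathrm{Cl}(\mathrm{Hyp}(W))^\times, \] such that \[ \rho_S(x)=-u^{-1}(\bigwedge g) \] as endomorphisms of $S$. Consequently, $\Lambda(\operatorname{SL}(W))$ is contained in the subgroup of $\mathrm{SO}(\mathrm{Hyp}(W))$ generated by the transported hyperbolic transvections.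
   Context: $K$ is a field with $2\in K^\times$; $\mathrm{Hyp}(W)$ is the quadratic form $Q(d,u)=d(u)$ on $W^*\oplus W$, with Clifford algebra $\mathrm{Cl}(\mathrm{Hyp}(W))$ and generator map $\iota$. $\rho_S$ is the exterior-model action on $S=\bigwedge W$ ($\iota(0,w)$ acts by $w\wedge-$, $\iota(d,0)$ by contraction with $d$). $\Lambda(g)$ acts by $(d,u)\mapsto((g^\vee)^{-1}d,gu)$ with $g^\vee$ the dual map. ''Even unitary'' means $x$ lies in the even Clifford part and $x\tilde x=\tilde x x=1$ for Clifford conjugation $\tilde{\ }$. A transported hyperbolic transvection, for $\delta\in W^*$, $w\in W$ with $\delta(w)=0$, is $T_{\delta,w}(d,u)=(d+d(w)\delta,\ u-\delta(u)w)$, with Clifford representative $x_{\delta,w}=1+\iota(\delta,0)\iota(0,w)$. A chosen-line square scaling, for $w\in W$, $f\in W^*$ with $f(w)=1$ and $t\in K^\times$, is $\lambda_t(d,u)=(d+(t^{-2}-1)d(w)f,\ u+(t^2-1)f(u)w)$, with Clifford representative $\iota(-t^{-1}f,tw)\iota(-f,w)$. *)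

From HB Require Import structures.
From mathcomp Require Import all_boot all_order all_algebra.
Set Implicit Arguments. Unset Strict Implicit. Unset Printing Implicit Defensive.
Import Order.TTheory GRing.Theory Num.Theory.
Local Open Scope ring_scope.

(* Model: W = 'cV[K]_n (column vectors), W^* = 'rV[K]_n (row vectors),
   pairing d(u) = (d *m u) 0 0.  Hyp(W) = W^* (+) W  represented as pairs. *)

Section Hyperbolic.
Variables (K : fieldType) (n : nat).

Local Notation V := ('rV[K]_n * 'cV[K]_n)%type.

Definition pair_ev (d : 'rV[K]_n) (u : 'cV[K]_n) : K := (d *m u) 0 0.

Definition hypQ (v : V) : K := pair_ev v.1 v.2.

Definition hyp_linear (B : lmodType K) (f : V -> B) : Prop :=
  forall (a : K) (v1 v2 : V),
    f (a *: v1.1 + v2.1, a *: v1.2 + v2.2) = a *: f v1 + f v2.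

Definition alg_morph (A B : algType K) (phi : A -> B) : Prop :=
  [/\ (forall a b, phi (a + b) = phi a + phi b),
      (forall (k : K) a, phi (k *: a) = k *: phi a),
      phi 1 = 1 &
      (forall a b, phi (a * b) = phi a * phi b)].

Definition clifford_rel (A : algType K) (iota : V -> A) : Prop :=
  hyp_linear iota /\ forall v, iota v * iota v = (hypQ v)%:A.

Definition clifford_universal (A : algType K) (iota : V -> A) : Prop :=
  clifford_rel iota /\
  forall (B : algType K) (f : V -> B), clifford_rel f ->
    exists phi : A -> B,
      [/\ alg_morph phi, (forall v, phi (iota v) = f v) &
          (forall psi : A -> B, alg_morph psi -> (forall v, psi (iota v) = f v) ->
             forall a, psi a = phi a)].

Definition clifford_conjugation (A : algType K) (iota : V -> A) (cj : A -> A) : Prop :=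
  [/\ (forall a b, cj (a + b) = cj a + cj b),
      (forall (k : K) a, cj (k *: a) = k *: cj a),
      cj 1 = 1,
      (forall a b, cj (a * b) = cj b * cj a) &
      (forall v, cj (iota v) = - iota v)].

Definition clifford_even (A : algType K) (iota : V -> A) (x : A) : Prop :=
  exists s : seq (K * seq V),
    all (fun p => ~~ odd (size p.2)) s /\
    x = \sum_(p <- s) p.1 *: \prod_(v <- p.2) iota v.

Definition even_unitary (A : algType K) (iota : V -> A) (cj : A -> A) (x : A) : Prop :=
  [/\ clifford_even iota x, x * cj x = 1 & cj x * x = 1].

(* ---------- exterior model S = /\ W, basis e_I, I ⊆ {0..n-1},
   e_I = e_{i1} /\ ... /\ e_{ik} with i1 < ... < ik ---------- *)
Local Notation ext := {ffun {set 'I_n} -> K^o}.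

Definition ext_basis (I : {set 'I_n}) : ext := [ffun J => (J == I)%:R].

Definition ext_wedge (w : 'cV[K]_n) (s : ext) : ext :=
  [ffun J : {set 'I_n} => \sum_(i in J)
      (-1) ^+ #|[set k in J | (k < i)%N]| * w i 0 * s (J :\ i)].

Definition ext_contr (d : 'rV[K]_n) (s : ext) : ext :=
  [ffun J : {set 'I_n} => \sum_(i in ~: J)
      (-1) ^+ #|[set k in J | (k < i)%N]| * d 0 i * s (i |: J)].

Definition rhoS_gen (v : V) (s : ext) : ext := ext_wedge v.2 s + ext_contr v.1 s.

Definition spinor_rep (A : algType K) (iota : V -> A) (act : A -> ext -> ext) : Prop :=
  [/\ (forall s, act 1 s = s),
      (forall a b s, act (a * b) s = act a (act b s)),
      (forall a b s, act (a + b) s = act a s + act b s),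
      (forall (k : K) a s, act (k *: a) s = k *: act a s) &
      (forall a (k : K) s1 s2, act a (k *: s1 + s2) = k *: act a s1 + act a s2)] /\
  (forall v s, act (iota v) s = rhoS_gen v s).

Definition ext_power (g : 'M[K]_n) (s : ext) : ext :=
  \sum_(I : {set 'I_n})
     s I *: foldr (fun i acc => ext_wedge (col i g) acc) (ext_basis set0) (enum I).

Definition Levi (g : 'M[K]_n) (v : V) : V := (v.1 *m invmx g, g *m v.2).

Definition hyp_transv (dl : 'rV[K]_n) (w : 'cV[K]_n) (v : V) : V :=
  (v.1 + pair_ev v.1 w *: dl, v.2 - pair_ev dl v.2 *: w).

Definition sq_scaling (w : 'cV[K]_n) (f : 'rV[K]_n) (t : K) (v : V) : V :=
  (v.1 + ((t ^- 2 - 1) * pair_ev v.1 w) *: f,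
   v.2 + ((t ^+ 2 - 1) * pair_ev f v.2) *: w).

Inductive hyp_factor :=
| HTransv of 'rV[K]_n & 'cV[K]_n
| HScale of 'cV[K]_n & 'rV[K]_n & K.

Definition factor_valid (F : hyp_factor) : Prop :=
  match F with
  | HTransv dl w => pair_ev dl w = 0
  | HScale w f t => pair_ev f w = 1 /\ t != 0
  end.

Definition is_scale (F : hyp_factor) : bool :=
  if F is HScale _ _ _ then true else false.

Definition factor_map (F : hyp_factor) : V -> V :=
  match F with
  | HTransv dl w => hyp_transv dl w
  | HScale w f t => sq_scaling w f t
  end.

Definition factors_map (fs : seq hyp_factor) : V -> V :=
  foldr (fun F h => factor_map F \o h) id fs.

Definition factor_rep (A : algType K) (iota : V -> A) (F : hyp_factor) : A :=
  match F with
  | HTransv dl w => 1 + iota (dl, 0) * iota (0, w)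
  | HScale w f t => iota (- (t^-1 *: f), t *: w) * iota (- f, w)
  end.

Definition factors_rep (A : algType K) (iota : V -> A) (fs : seq hyp_factor) : A :=
  \prod_(F <- fs) factor_rep iota F.

Inductive gen_by_transv : (V -> V) -> Prop :=
| gbt_id : gen_by_transv id
| gbt_transv dl w : pair_ev dl w = 0 -> gen_by_transv (hyp_transv dl w)
| gbt_comp f h : gen_by_transv f -> gen_by_transv h -> gen_by_transv (f \o h)
| gbt_inv f h : gen_by_transv f -> cancel f h -> cancel h f -> gen_by_transv h.

(* ---------- matrices relative to a basis: columns of P are e_1..e_n ---------- *)
Definition in_basis (P M : 'M[K]_n) : 'M[K]_n := P *m M *m invmx P.

Definition elem_transv (P : 'M[K]_n) (i j : 'I_n) (a : K) : 'M[K]_n :=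
  in_basis P (1%:M + a *: delta_mx i j).

Definition elem_prod (P : 'M[K]_n) (s : seq ('I_n * 'I_n * K)) : 'M[K]_n :=
  foldr (fun p M => elem_transv P p.1.1 p.1.2 p.2 *m M) 1%:M s.

Definition elem_valid (s : seq ('I_n * 'I_n * K)) : bool :=
  all (fun p => p.1.1 != p.1.2) s.

Definition line_scale (P : 'M[K]_n) (i1 : 'I_n) (c : K) : 'M[K]_n :=
  in_basis P (1%:M + (c - 1) *: delta_mx i1 i1).

Definition diag_pair (P : 'M[K]_n) (i1 j : 'I_n) (t : K) : 'M[K]_n :=
  in_basis P (1%:M + (t - 1) *: delta_mx j j + (t^-1 - 1) *: delta_mx i1 i1).

Definition diag_prod (P : 'M[K]_n) (i1 : 'I_n) (t : 'I_n -> K) : 'M[K]_n :=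
  foldr (fun j M => diag_pair P i1 j (t j) *m M) 1%:M [seq j <- enum 'I_n | j != i1].

End Hyperbolic.

Definition all_factors_valid (K : fieldType) (n : nat) (fs : seq (hyp_factor K n)) : Prop :=
  foldr (fun F Pr => factor_valid F /\ Pr) True fs.

(* Row reduction by elementary transvections writes every invertible g as
   E * L_1(det g) with E a product of elementary transvections, so all the
   D_{j1} factors may be taken trivial.  In the basis, Lambda sends the
   elementary transvection 1 + a e_i e_j^* to the hyperbolic transvection
   T_{-a e_j^*, e_i} and L_1(u^2) to the square scaling lambda_u.  Each
   Clifford representative x_F twists the generators by its map,
   x_F iota(z) = iota(F z) x_F (for lambda_u, a product of two reflections in
   vectors of norm -1), so their product x satisfies x iota(0,w) = iota(0,g w) x.
   As iota(0,w) acts on /\W by w /\ -, rho_S(x) is then determined by its value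
   on the vacuum, where the transvection factors act trivially and the
   reflection pair acts by -u^-1; hence rho_S(x) = -u^-1 /\g. *)

From HB Require Import structures.
From mathcomp Require Import all_boot all_order all_algebra.
From mathcomp Require Import ring.
From Stdlib Require Import FunctionalExtensionality.
Import Order.TTheory GRing.Theory Num.Theory.
Local Open Scope ring_scope.
Set Implicit Arguments. Unset Strict Implicit. Unset Printing Implicit Defensive.

Section PairEv.
Variables (K : fieldType) (n : nat).
Implicit Types (d : 'rV[K]_n) (u w : 'cV[K]_n).

Lemma pair_ev0l u : pair_ev 0 u = 0.
Proof. by rewrite /pair_ev mul0mx mxE. Qed.
Lemma pair_ev0r d : pair_ev d 0 = 0.
Proof. by rewrite /pair_ev mulmx0 mxE. Qed.
Lemma pair_evDl d1 d2 u : pair_ev (d1 + d2) u = pair_ev d1 u + pair_ev d2 u.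
Proof. by rewrite /pair_ev mulmxDl mxE. Qed.
Lemma pair_evDr d u1 u2 : pair_ev d (u1 + u2) = pair_ev d u1 + pair_ev d u2.
Proof. by rewrite /pair_ev mulmxDr mxE. Qed.
Lemma pair_evNl d u : pair_ev (- d) u = - pair_ev d u.
Proof. by rewrite /pair_ev mulNmx mxE. Qed.
Lemma pair_evNr d u : pair_ev d (- u) = - pair_ev d u.
Proof. by rewrite /pair_ev mulmxN mxE. Qed.
Lemma pair_evZl a d u : pair_ev (a *: d) u = a * pair_ev d u.
Proof. by rewrite /pair_ev -scalemxAl mxE. Qed.
Lemma pair_evZr a d u : pair_ev d (a *: u) = a * pair_ev d u.
Proof. by rewrite /pair_ev -scalemxAr mxE. Qed.

Lemma mul_row_outer d w (f : 'rV[K]_n) : d *m (w *m f) = pair_ev d w *: f.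
Proof. by rewrite mulmxA [d *m w]mx11_scalar mul_scalar_mx. Qed.
Lemma mul_outer_col w f u : (w *m f) *m u = pair_ev f u *: w.
Proof. by rewrite -mulmxA [f *m u]mx11_scalar mul_mx_scalar. Qed.

End PairEv.

Section LeviEmbedding.
Variables (K : fieldType) (n : nat).
Implicit Types (A B X : 'M[K]_n) (w : 'cV[K]_n) (f : 'rV[K]_n)
  (v : 'rV[K]_n * 'cV[K]_n).

Lemma mulmx1_invmx A X : A *m X = 1%:M -> invmx A = X.
Proof.
move=> AX1; have [uA _] := mulmx1_unit AX1.
by rewrite -[invmx A]mulmx1 -AX1 mulmxA mulVmx // mul1mx.
Qed.

Lemma invmx_mulmx A B : A \in unitmx -> B \in unitmx ->
  invmx (A *m B) = invmx B *m invmx A.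
Proof.
move=> uA uB; apply: mulmx1_invmx.
by rewrite mulmxA -(mulmxA A) mulmxV // mulmx1 mulmxV.
Qed.

Lemma Levi1 v : Levi 1%:M v = v.
Proof. by case: v => d u; rewrite /Levi invmx1 mulmx1 mul1mx. Qed.

Lemma LeviM A B : A \in unitmx -> B \in unitmx ->
  Levi (A *m B) =1 Levi A \o Levi B.
Proof. by move=> uA uB [d u]; rewrite /Levi /= invmx_mulmx // !mulmxA. Qed.

Lemma Levi_W A u : Levi A (0, u) = (0, A *m u).
Proof. by rewrite /Levi mul0mx. Qed.

Lemma outer_mul w f a b : (1%:M + a *: (w *m f)) *m (1%:M + b *: (w *m f)) =
  1%:M + (a + b + a * b * pair_ev f w) *: (w *m f).
Proof.
rewrite mulmxDl !mulmxDr !mul1mx mulmx1 -!scalemxAl -!scalemxAr -mulmxA.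
rewrite mul_row_outer -scalemxAr !scalerA !scalerDl mulrA -!addrA.
by congr (_ + _); rewrite addrCA.
Qed.

Lemma Levi_outer w f a b : a + b + a * b * pair_ev f w = 0 ->
  Levi (1%:M + a *: (w *m f)) =1
  fun v => (v.1 + (b * pair_ev v.1 w) *: f, v.2 + (a * pair_ev f v.2) *: w).
Proof.
move=> ab0 v; rewrite /Levi (mulmx1_invmx (X := 1%:M + b *: (w *m f))).
  by rewrite mulmxDr mulmxDl mulmx1 mul1mx -scalemxAr -scalemxAl
             mul_row_outer mul_outer_col !scalerA.
by rewrite outer_mul ab0 scale0r addr0.
Qed.

End LeviEmbedding.

Section Elimination.
Variables (K : fieldType) (n : nat).
Local Notation M := 'M[K]_n.+1.
Local Notation I := 'I_n.+1.
Implicit Types (N : M) (a b i j k : I) (x : K).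

Definition elmx a b x : M := 1%:M + x *: delta_mx a b.

Definition elmx_prod (s : seq (I * I * K)) : M :=
  foldr (fun p E => elmx p.1.1 p.1.2 p.2 *m E) 1%:M s.

Definition is_elmx_prod (E : M) := exists2 s, elem_valid s & E = elmx_prod s.

Definition line_mx i (c : K) : M := 1%:M + (c - 1) *: delta_mx i i.

Lemma is_elmx_prod1 : is_elmx_prod 1%:M.
Proof. by exists [::]. Qed.

Lemma is_elmx_prodM E1 E2 :
  is_elmx_prod E1 -> is_elmx_prod E2 -> is_elmx_prod (E1 *m E2).
Proof.
move=> [s1 v1 ->] [s2 v2 ->]; exists (s1 ++ s2).
  by rewrite /elem_valid all_cat; apply/andP.
by elim: s1 {v1} => [|p s1 IH] /=; rewrite ?mul1mx // -IH mulmxA.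
Qed.

Lemma is_elmx_prod_elmx a b x : a != b -> is_elmx_prod (elmx a b x).
Proof. by exists [:: (a, b, x)]; rewrite /elem_valid /= ?andbT ?mulmx1. Qed.

Lemma elmxE a b x N i j :
  (elmx a b x *m N) i j = N i j + (if i == a then x * N b j else 0).
Proof.
rewrite mulmxDl mul1mx -scalemxAl mxE [in X in _ + X]mxE; congr (_ + _).
rewrite mxE (bigD1 b) //= big1 => [|k /negbTE kb]; last by rewrite mxE kb andbF mul0r.
by rewrite mxE eqxx andbT addr0; case: (i == a); rewrite ?mul1r ?mul0r ?mulr0.
Qed.

Lemma elmxK a b x N : a != b -> elmx a b (- x) *m (elmx a b x *m N) = N.
Proof.
move=> ab; rewrite mulmxA /elmx mulmxDl !mulmxDr !mul1mx mulmx1.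
rewrite -scalemxAl -scalemxAr mul_delta_mx_0 1?eq_sym // !scaler0 addr0.
by rewrite scaleNr addrK mul1mx.
Qed.

(* Expand along row [a]: the correction term has rows [a] and [b] equal. *)
Lemma det_elmxM a b x N : a != b -> \det (elmx a b x *m N) = \det N.
Proof.
move=> ab; set C := \matrix_(i, j) N (if i == a then b else i) j.
have C0 : \det C = 0.
  by apply: (determinant_alternate ab) => j; rewrite !mxE eqxx eq_sym (negbTE ab).
rewrite (@determinant_multilinear _ _ _ N C a 1 x) ?C0 ?mulr0 ?addr0 ?mul1r //.
- by apply/rowP => j; rewrite [LHS]mxE elmxE eqxx !mxE mul1r eqxx.
- by apply/matrixP => i j; rewrite [RHS]mxE elmxE eq_sym (negbTE (neq_lift _ _)) addr0 mxE.
- apply/matrixP => i j; rewrite [RHS]mxE elmxE eq_sym (negbTE (neq_lift _ _)) addr0 !mxE.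
  by rewrite eq_sym (negbTE (neq_lift _ _)).
Qed.

Lemma det_elmx a b x : a != b -> \det (elmx a b x) = 1.
Proof. by move=> ab; rewrite -[elmx a b x]mulmx1 det_elmxM // det1. Qed.

Lemma det_elmx_prod s : elem_valid s -> \det (elmx_prod s) = 1.
Proof.
elim: s => [|p s IH] /=; first by rewrite det1.
by case/andP => ab vs; rewrite det_elmxM // IH.
Qed.

Lemma det_line_mx i c : \det (line_mx i c) = c.
Proof.
have -> : line_mx i c = diag_mx (\row_k (if k == i then c else 1)).
  apply/matrixP => k l; rewrite !mxE.
  case: (eqVneq k l) => [<-|kl]; rewrite ?andbb /=.
    by case: eqP => _; rewrite ?mulr1 ?mulr0 ?addr0 // addrC subrK.
  rewrite add0r; case: (eqVneq k i) => [ki|_]; last by rewrite mulr0.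
  by rewrite -ki eq_sym (negbTE kl) mulr0.
rewrite det_diag (bigD1 i) //= big1 => [|k ki]; first by rewrite !mxE eqxx mulr1.
by rewrite mxE (negbTE ki).
Qed.

Definition elmx_equiv N N' := exists2 E, is_elmx_prod E & N = E *m N'.

Lemma elmx_equiv_refl N : elmx_equiv N N.
Proof. by exists 1%:M; rewrite ?mul1mx //; exact: is_elmx_prod1. Qed.

Lemma elmx_equiv_trans N1 N2 N3 :
  elmx_equiv N1 N2 -> elmx_equiv N2 N3 -> elmx_equiv N1 N3.
Proof.
move=> [E1 h1 ->] [E2 h2 ->]; exists (E1 *m E2); last by rewrite mulmxA.
exact: is_elmx_prodM.
Qed.

Lemma elmx_equiv_elmxM a b x N : a != b -> elmx_equiv N (elmx a b x *m N).
Proof. by move=> ab; exists (elmx a b (- x)); [exact: is_elmx_prod_elmx | rewrite elmxK]. Qed.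

Lemma det_elmx_equiv N N' : elmx_equiv N N' -> \det N = \det N'.
Proof. by move=> [E [s vs ->] ->]; rewrite det_mulmx det_elmx_prod // mul1r. Qed.

Definition std_cols_after (k : nat) N := forall i j, (k < j)%N -> N i j = (i == j)%:R.

Lemma std_cols_after_elmxM k a b x N :
  (b <= k)%N -> std_cols_after k N -> std_cols_after k (elmx a b x *m N).
Proof.
move=> bk hN i j kj; rewrite elmxE hN // (hN b) //.
have /negbTE -> : b != j by rewrite neq_ltn (leq_ltn_trans bk kj).
by rewrite mulr0 if_same addr0.
Qed.

(* Otherwise [N] kills the vector [e_p - \sum_(p < j) N j p e_j]. *)
Lemma exists_pivot N (p : I) : N \in unitmx -> std_cols_after p N ->
  exists2 b : I, (b <= p)%N & N b p != 0.
Proof.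
move=> uN hN.
have [b /andP [bp Nbp] | Nb] := pickP [pred b : I | (b <= p)%N && (N b p != 0)].
  by exists b.
have Nb0 b : (b <= p)%N -> N b p = 0.
  by move=> bp; move: (Nb b); rewrite /= bp => /negbFE/eqP.
pose x : 'cV[K]_n.+1 :=
  \col_j (if j == p then 1 else if (p < j)%N then - N j p else 0).
have Nx0 : N *m x = 0.
  apply/matrixP => i k; rewrite !mxE (bigD1 p) //= mxE eqxx mulr1.
  rewrite (eq_bigr (fun j => if (p < j)%N then - ((i == j)%:R * N j p) else 0)); last first.
    move=> j jp; rewrite mxE (negbTE jp).
    by case: ifP => [/hN ->|_]; rewrite ?mulrN ?mulr0.
  have [ip|pi] := leqP i p.
    rewrite Nb0 // add0r big1 // => j jp; case: ifP => // pj.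
    have /negbTE -> : i != j by rewrite neq_ltn (leq_ltn_trans ip pj).
    by rewrite mul0r oppr0.
  have ip : i != p by rewrite neq_ltn pi orbT.
  rewrite (bigD1 i) //= pi eqxx mul1r big1 ?addr0 ?addrN // => j /andP [_ ji].
  by case: ifP => // _; rewrite eq_sym (negbTE ji) mul0r oppr0.
have : x = 0 by rewrite -(mulKmx uN x) Nx0 mulmx0.
by move/matrixP/(_ p 0); rewrite !mxE eqxx => /eqP; rewrite oner_eq0.
Qed.

Lemma clear_rows N k (l : seq I) : N k k != 0 -> exists N', elmx_equiv N N' /\
  forall i j, N' i j = if (i \in l) && (i != k) then N i j - N i k / N k k * N k j
                       else N i j.
Proof.
move=> Nkk; elim: l => [|a l [N' [eN hN']]].
  by exists N; split => [|i j //]; exact: elmx_equiv_refl.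
have [al | anl] := boolP ((a \in l) || (a == k)).
  exists N'; split => // i j; rewrite hN' in_cons.
  have [->|//] := eqVneq i a.
  by case/orP: al => [->|/eqP->]; rewrite ?eqxx ?andbF.
move: anl; rewrite negb_or => /andP [al ak].
exists (elmx a k (- (N a k / N k k)) *m N'); split.
  exact: elmx_equiv_trans eN (elmx_equiv_elmxM _ _ ak).
move=> i j; rewrite elmxE !hN' in_cons eqxx andbF.
have [->|ia] := eqVneq i a; last by rewrite addr0.
by rewrite (negbTE al) ak /= mulNr.
Qed.

Lemma clear_column N k : N k k != 0 -> exists N', elmx_equiv N N' /\
  forall i j, N' i j = if i == k then N i j else N i j - N i k / N k k * N k j.
Proof.
move=> Nkk; have [N' [eN hN']] := clear_rows (enum I) Nkk.
by exists N'; split => // i j; rewrite hN' mem_enum; case: eqP.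
Qed.

Lemma elmx_set_one N a b (p : I) : std_cols_after p N -> (b <= p)%N -> a != b ->
  N b p != 0 -> exists N', [/\ elmx_equiv N N', std_cols_after p N' & N' a p = 1].
Proof.
move=> hN bp ab Nbp; exists (elmx a b ((1 - N a p) / N b p) *m N).
split; [exact: elmx_equiv_elmxM | exact: std_cols_after_elmxM |].
by rewrite elmxE eqxx divfK // addrC subrK.
Qed.

Lemma pivot_to_one N (p : I) : N \in unitmx -> (0 < p)%N -> std_cols_after p N ->
  exists N', [/\ elmx_equiv N N', std_cols_after p N' & N' p p = 1].
Proof.
move=> uN p0 hN; have [b bp Nbp] := exists_pivot uN hN.
have [bp_eq|bp_neq] := eqVneq b p; last by apply: elmx_set_one hN bp _ Nbp; rewrite eq_sym.
have op : ord0 != p by rewrite neq_ltn p0.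
rewrite {}bp_eq in Nbp bp.
have [N0 [e0 h0 N0op]] := elmx_set_one hN bp op Nbp.
have [N1 [e1 h1 N1pp]] : exists N1, [/\ elmx_equiv N0 N1, std_cols_after p N1 & N1 p p = 1].
  by apply: (elmx_set_one (b := ord0)) h0 (leq0n p) _ _; rewrite ?N0op ?oner_eq0 // eq_sym.
by exists N1; split => //; exact: elmx_equiv_trans e0 e1.
Qed.

Lemma reduce_column N (p : I) : N \in unitmx -> (0 < p)%N -> std_cols_after p N ->
  exists N', elmx_equiv N N' /\ std_cols_after p.-1 N'.
Proof.
move=> uN p0 hN; have [N1 [e1 h1 N1pp]] := pivot_to_one uN p0 hN.
have N1pp0 : N1 p p != 0 by rewrite N1pp oner_eq0.
have [N2 [e2 h2]] := clear_column N1pp0.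
exists N2; split => [|i j pj]; first exact: elmx_equiv_trans e1 e2.
rewrite h2 N1pp divr1; have [pj'|jp] := ltnP p j.
  have /negbTE pjF : p != j by rewrite neq_ltn pj'.
  by rewrite (h1 p j pj') (h1 i j pj') pjF mulr0 subr0 if_same.
have -> : j = p by apply/val_inj/eqP => /=; rewrite eqn_leq jp -(prednK p0) pj.
by rewrite N1pp mulr1 subrr; case: eqVneq => [->|].
Qed.

Lemma reduce_to_line_mx (k : nat) N : (k <= n)%N -> N \in unitmx -> std_cols_after k N ->
  exists c, elmx_equiv N (line_mx ord0 c).
Proof.
elim: k N => [|k IH] N kn uN hN; last first.
  have [N' [eN hN']] := reduce_column (p := Ordinal (kn : (k.+1 < n.+1)%N)) uN isT hN.
  have uN' : N' \in unitmx by rewrite unitmxE -(det_elmx_equiv eN).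
  have [c ec] := IH N' (ltnW kn) uN' hN'.
  by exists c; exact: elmx_equiv_trans eN ec.
have [b b0 Nb0] := exists_pivot (p := ord0) uN hN.
have {b0}eb : b = ord0 by apply/val_inj/eqP; rewrite -leqn0.
rewrite {b}eb in Nb0; have [N' [eN hN']] := clear_column Nb0.
exists (N ord0 ord0); suff <- : N' = line_mx ord0 (N ord0 ord0) by [].
apply/matrixP => i j; rewrite hN' !mxE.
have [->|j0] := eqVneq j ord0.
  have [->|i0] := eqVneq i ord0; first by rewrite mulr1 addrC subrK.
  by rewrite divfK // subrr mulr0 addr0.
rewrite andbF mulr0 addr0 (hN ord0 j) ?lt0n // (eq_sym ord0 j) (negbTE j0) mulr0 subr0.
by rewrite if_same hN ?lt0n.
Qed.

Lemma unitmx_elmx_prod_line_mx N : N \in unitmx ->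
  exists2 s, elem_valid s & N = elmx_prod s *m line_mx ord0 (\det N).
Proof.
move=> uN; have hN : std_cols_after n N by move=> i j; rewrite ltnNge -ltnS ltn_ord.
have [c [E [s vs ->] eN]] := reduce_to_line_mx (leqnn n) uN hN.
by exists s; rewrite // eN det_mulmx det_elmx_prod // det_line_mx mul1r.
Qed.

End Elimination.

Section CliffordRelations.
Variables (K : fieldType) (n : nat) (A : algType K).
Variables (iota : 'rV[K]_n * 'cV[K]_n -> A) (hrel : clifford_rel iota).
Implicit Types (d dl f : 'rV[K]_n) (u w : 'cV[K]_n) (z : 'rV[K]_n * 'cV[K]_n).

Lemma iota_sq z : iota z * iota z = (hypQ z)%:A.
Proof. by case: hrel. Qed.

Lemma iotaDZ a d1 u1 d2 u2 :
  iota (a *: d1 + d2, a *: u1 + u2) = a *: iota (d1, u1) + iota (d2, u2).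
Proof. by case: hrel => lin _; rewrite -lin. Qed.

Lemma iotaD d1 u1 d2 u2 : iota (d1 + d2, u1 + u2) = iota (d1, u1) + iota (d2, u2).
Proof. by have := iotaDZ 1 d1 u1 d2 u2; rewrite !scale1r. Qed.

Lemma iota00 : iota (0, 0) = 0.
Proof. by apply: (addrI (iota (0, 0))); rewrite addr0 -iotaD !addr0. Qed.

Lemma iotaZ a d u : iota (a *: d, a *: u) = a *: iota (d, u).
Proof. by rewrite -[a *: d]addr0 -[a *: u]addr0 iotaDZ iota00 addr0. Qed.

Lemma iotaN d u : iota (- d, - u) = - iota (d, u).
Proof. by rewrite -[RHS]scaleN1r -iotaZ !scaleN1r. Qed.

Lemma iotaB d1 u1 d2 u2 : iota (d1 - d2, u1 - u2) = iota (d1, u1) - iota (d2, u2).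
Proof. by rewrite iotaD iotaN. Qed.

Lemma iota_split d u : iota (d, u) = iota (d, 0) + iota (0, u).
Proof. by rewrite -iotaD addr0 add0r. Qed.

Lemma iota_anticomm z1 z2 : iota z1 * iota z2 =
  (pair_ev z1.1 z2.2 + pair_ev z2.1 z1.2)%:A - iota z2 * iota z1.
Proof.
case: z1 z2 => [d1 u1] [d2 u2] /=; apply/eqP; rewrite eq_sym subr_eq; apply/eqP.
have := iota_sq (d1 + d2, u1 + u2); rewrite iotaD mulrDl !mulrDr !iota_sq /hypQ /=.
rewrite !pair_evDl !pair_evDr !scalerDl -!addrA => /addrI; rewrite !addrA => /addIr.
by move=> ->.
Qed.

(* Suffix [W] refers to generators [iota (0, u)] from [W], suffix [Wd] to generators
   [iota (d, 0)] from the dual [W^*]. *)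
Lemma iota_anticommW u1 u2 : iota (0, u1) * iota (0, u2) = - (iota (0, u2) * iota (0, u1)).
Proof. by rewrite iota_anticomm /= !pair_ev0l addr0 scale0r sub0r. Qed.

Lemma iota_anticommWd d1 d2 : iota (d1, 0) * iota (d2, 0) = - (iota (d2, 0) * iota (d1, 0)).
Proof. by rewrite iota_anticomm /= !pair_ev0r addr0 scale0r sub0r. Qed.

Lemma iota_sqW u : iota (0, u) * iota (0, u) = 0.
Proof. by rewrite iota_sq /hypQ /= pair_ev0l scale0r. Qed.

Lemma iota_sqWd d : iota (d, 0) * iota (d, 0) = 0.
Proof. by rewrite iota_sq /hypQ /= pair_ev0r scale0r. Qed.

Lemma iota_anticommWdW d u :
  iota (d, 0) * iota (0, u) = (pair_ev d u)%:A - iota (0, u) * iota (d, 0).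
Proof. by rewrite iota_anticomm /= pair_ev0l addr0. Qed.

Lemma iota_anticommWWd u d :
  iota (0, u) * iota (d, 0) = (pair_ev d u)%:A - iota (d, 0) * iota (0, u).
Proof. by rewrite iota_anticomm /= pair_ev0l add0r. Qed.

Lemma iotaWdD d1 d2 : iota (d1 + d2, 0) = iota (d1, 0) + iota (d2, 0).
Proof. by rewrite -iotaD addr0. Qed.
Lemma iotaWdZ a d : iota (a *: d, 0) = a *: iota (d, 0).
Proof. by rewrite -iotaZ scaler0. Qed.
Lemma iotaWD u1 u2 : iota (0, u1 + u2) = iota (0, u1) + iota (0, u2).
Proof. by rewrite -iotaD addr0. Qed.
Lemma iotaWZ a u : iota (0, a *: u) = a *: iota (0, u).
Proof. by rewrite -iotaZ scaler0. Qed.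

Section Transvection.
Variables (dl : 'rV[K]_n) (w : 'cV[K]_n) (dlw0 : pair_ev dl w = 0).
Local Notation x := (1 + iota (dl, 0) * iota (0, w)).

Lemma transv_rep_intertwWd d :
  x * iota (d, 0) = iota (d + pair_ev d w *: dl, 0) * x.
Proof.
rewrite iotaWdD iotaWdZ mulrDl mul1r -mulrA iota_anticommWWd mulrBr mulr_algr.
rewrite mulrA iota_anticommWd mulNr opprK mulrDr mulr1 mulrDl -scalerAl mulrA.
by rewrite mulrA iota_sqWd mul0r scaler0 addr0 addrA.
Qed.

Lemma transv_rep_intertwW u :
  x * iota (0, u) = iota (0, u - pair_ev dl u *: w) * x.
Proof.
rewrite iotaWD -scaleNr iotaWZ mulrDl mul1r -mulrA iota_anticommW mulrN mulrA.
rewrite (iota_anticommWdW dl u) mulrBl mulr_algl mulrDr mulr1 mulrDl -scalerAl !mulrA.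
have -> : iota (0, w) * iota (dl, 0) * iota (0, w) = 0.
  by rewrite iota_anticommWWd dlw0 scale0r sub0r mulNr -mulrA iota_sqW mulr0 oppr0.
by rewrite scaler0 addr0 scaleNr opprB -addrA (addrC (- _)) addrA.
Qed.

Lemma transv_rep_intertw z : x * iota z = iota (hyp_transv dl w z) * x.
Proof.
case: z => d u; rewrite /hyp_transv /= (iota_split d) (iota_split (d + _)).
by rewrite [LHS]mulrDr [RHS]mulrDl transv_rep_intertwWd transv_rep_intertwW.
Qed.

End Transvection.

Lemma iota_reflect p z : hypQ p = -1 ->
  iota p * iota z = iota (- (pair_ev p.1 z.2 + pair_ev z.1 p.2) *: p.1 - z.1,
                          - (pair_ev p.1 z.2 + pair_ev z.1 p.2) *: p.2 - z.2) * iota p.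
Proof.
case: p z => d u [d' u'] /= Qp; rewrite iotaB iotaZ mulrBl -scalerAl iota_sq Qp.
by rewrite scaleN1r scalerN scaleNr opprK iota_anticomm.
Qed.

Lemma scale_rep_intertw w f t z : pair_ev f w = 1 -> t != 0 ->
  iota (- (t^-1 *: f), t *: w) * iota (- f, w) * iota z =
  iota (sq_scaling w f t z) * (iota (- (t^-1 *: f), t *: w) * iota (- f, w)).
Proof.
move=> fw t0.
have Qq : hypQ (- f, w) = -1 by rewrite /hypQ /= pair_evNl fw.
have Qp : hypQ (- (t^-1 *: f), t *: w) = -1.
  by rewrite /hypQ /= pair_evNl pair_evZl pair_evZr fw mulr1 mulVf.
rewrite -mulrA (iota_reflect _ Qq) mulrA (iota_reflect _ Qp) -mulrA; congr (iota _ * _).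
case: z => d u; rewrite /sq_scaling /=.
rewrite !(pair_evNl, pair_evNr, pair_evZl, pair_evZr, pair_evDl, pair_evDr, fw).
by congr (_, _); apply/matrixP => i j; rewrite !mxE; field.
Qed.

Lemma factor_rep_intertw F z : factor_valid F ->
  factor_rep iota F * iota z = iota (factor_map F z) * factor_rep iota F.
Proof.
case: F => [dl w dlw0 | w f t [fw t0]] /=; first exact: transv_rep_intertw.
exact: scale_rep_intertw.
Qed.

Lemma factors_rep_intertw fs z : all_factors_valid fs ->
  factors_rep iota fs * iota z = iota (factors_map fs z) * factors_rep iota fs.
Proof.
rewrite /factors_rep; elim: fs z => [|F fs IH] z /=; first by rewrite big_nil mul1r mulr1.
by case=> vF vfs; rewrite big_cons -mulrA IH // mulrA factor_rep_intertw // -mulrA.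
Qed.

End CliffordRelations.

Section EvenUnitary.
Variables (K : fieldType) (n : nat) (A : algType K).
Variables (iota : 'rV[K]_n * 'cV[K]_n -> A) (hrel : clifford_rel iota).
Variables (cj : A -> A) (hcj : clifford_conjugation iota cj).
Implicit Types (x y : A) (z : 'rV[K]_n * 'cV[K]_n).

Lemma cjD x y : cj (x + y) = cj x + cj y. Proof. by case: hcj. Qed.
Lemma cj1 : cj 1 = 1. Proof. by case: hcj. Qed.
Lemma cjM x y : cj (x * y) = cj y * cj x. Proof. by case: hcj. Qed.
Lemma cj_iota z : cj (iota z) = - iota z. Proof. by case: hcj. Qed.

Lemma clifford_even1 : clifford_even iota 1.
Proof. by exists [:: (1, [::])]; rewrite !big_cons !big_nil scale1r addr0. Qed.

Lemma clifford_even_iotaM z1 z2 : clifford_even iota (iota z1 * iota z2).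
Proof. by exists [:: (1, [:: z1; z2])]; rewrite // !big_cons !big_nil scale1r mulr1 addr0. Qed.

Lemma clifford_evenD x y :
  clifford_even iota x -> clifford_even iota y -> clifford_even iota (x + y).
Proof. by move=> [s [es ->]] [s' [es' ->]]; exists (s ++ s'); rewrite all_cat es es' big_cat. Qed.

Lemma clifford_evenM x y :
  clifford_even iota x -> clifford_even iota y -> clifford_even iota (x * y).
Proof.
move=> [s [es ->]] [s' [es' ->]].
exists [seq (p.1 * p'.1, p.2 ++ p'.2) | p <- s, p' <- s']; split.
  apply/all_allpairsP => p p' ps ps' /=; rewrite size_cat oddD.
  by rewrite (negbTE (allP es _ ps)) (negbTE (allP es' _ ps')).
rewrite big_allpairs_dep /= mulr_suml; apply: eq_bigr => p _.
rewrite mulr_sumr; apply: eq_bigr => p' _.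
by rewrite big_cat /= -scalerAl -scalerAr scalerA.
Qed.

Lemma even_unitary1 : even_unitary iota cj 1.
Proof. by split; rewrite ?cj1 ?mulr1 //; exact: clifford_even1. Qed.

Lemma even_unitaryM x y :
  even_unitary iota cj x -> even_unitary iota cj y -> even_unitary iota cj (x * y).
Proof.
move=> [ex xx' x'x] [ey yy' y'y]; split; rewrite ?cjM; first exact: clifford_evenM.
  by rewrite -mulrA (mulrA y) yy' mul1r.
by rewrite -mulrA (mulrA (cj x)) x'x mul1r.
Qed.

Lemma even_unitary_transv_rep dl w : pair_ev dl w = 0 ->
  even_unitary iota cj (1 + iota (dl, 0) * iota (0, w)).
Proof.
move=> dlw0; set a := iota (dl, 0); set b := iota (0, w).
have ba : b * a = - (a * b) by rewrite (iota_anticommWWd hrel) dlw0 scale0r sub0r.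
have ab2 : a * b * (a * b) = 0.
  by rewrite -mulrA (mulrA b) ba mulNr -mulrA (iota_sqW hrel) mulr0 oppr0 mulr0.
have cjx : cj (1 + a * b) = 1 - a * b by rewrite cjD cj1 cjM !cj_iota mulrNN ba.
split; rewrite ?cjx.
- by apply: clifford_evenD; [exact: clifford_even1 | exact: clifford_even_iotaM].
- by rewrite mulrDl mul1r mulrBr mulr1 ab2 subr0 subrK.
- by rewrite mulrBl mul1r mulrDr mulr1 ab2 addr0 addrK.
Qed.

Lemma even_unitary_iotaM p q : hypQ p = -1 -> hypQ q = -1 ->
  even_unitary iota cj (iota p * iota q).
Proof.
move=> Qp Qq; have cjx : cj (iota p * iota q) = iota q * iota p.
  by rewrite cjM !cj_iota mulrNN.
split; rewrite ?cjx; first exact: clifford_even_iotaM.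
  rewrite -mulrA (mulrA (iota q)) (iota_sq hrel) Qq scaleN1r mulN1r mulrN.
  by rewrite (iota_sq hrel) Qp scaleN1r opprK.
rewrite -mulrA (mulrA (iota p)) (iota_sq hrel) Qp scaleN1r mulN1r mulrN.
by rewrite (iota_sq hrel) Qq scaleN1r opprK.
Qed.

Lemma factors_rep_even_unitary fs : all_factors_valid fs ->
  even_unitary iota cj (factors_rep iota fs).
Proof.
rewrite /factors_rep; elim: fs => [|F fs IH] /=.
  by rewrite big_nil => _; exact: even_unitary1.
case=> vF vfs; rewrite big_cons; apply: even_unitaryM (IH vfs).
case: F vF => [dl w | w f t [fw t0]] /=; first exact: even_unitary_transv_rep.
apply: even_unitary_iotaM; rewrite /hypQ /= pair_evNl ?pair_evZl ?pair_evZr fw //.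
by rewrite mulr1 mulVf.
Qed.

End EvenUnitary.

Section ExteriorBasis.
Variables (K : fieldType) (n : nat).
Local Notation S := {ffun {set 'I_n} -> K^o}.
Local Notation e_ := (ext_basis K).
Local Notation wedge_cols M r :=
  (foldr (fun i acc => ext_wedge (col i M) acc) (e_ set0) r).

Lemma ext_wedge0 (s : S) : ext_wedge 0 s = 0.
Proof. by apply/ffunP => J; rewrite !ffunE big1 // => i _; rewrite mxE mulr0 mul0r. Qed.

Lemma ext_contr0 (s : S) : ext_contr 0 s = 0.
Proof. by apply/ffunP => J; rewrite !ffunE big1 // => i _; rewrite mxE mulr0 mul0r. Qed.

Lemma ext_contr_vacuum (d : 'rV[K]_n) : ext_contr d (e_ set0) = 0.
Proof.
apply/ffunP => J; rewrite !ffunE big1 // => i _; rewrite ffunE.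
by rewrite (_ : (i |: J == set0) = false) ?mulr0 //; apply/negbTE/set0Pn; exists i; exact: setU11.
Qed.

Lemma ext_wedgeZ (w : 'cV[K]_n) c (s : S) : ext_wedge w (c *: s) = c *: ext_wedge w s.
Proof.
apply/ffunP => J; rewrite !ffunE scaler_sumr; apply: eq_bigr => i _.
by rewrite ffunE scalerAr.
Qed.

Lemma ext_basis_decomp (s : S) : s = \sum_I s I *: e_ I.
Proof.
apply/ffunP => J; rewrite sum_ffunE (bigD1 J) //= big1 => [|I IJ].
  by rewrite !ffunE eqxx addr0 [_ *: _]mulr1.
by rewrite !ffunE eq_sym (negbTE IJ) [_ *: _]mulr0.
Qed.

Lemma ext_wedge_basis (i : 'I_n) (J : {set 'I_n}) : (forall j, j \in J -> (i < j)%N) ->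
  ext_wedge (col i 1%:M) (e_ J) = e_ (i |: J).
Proof.
move=> iJ; have iNJ : i \notin J by apply/negP => /iJ; rewrite ltnn.
apply/ffunP => L; rewrite !ffunE.
have [iL|iNL] := boolP (i \in L); last first.
  rewrite big1 => [|k kL]; last by rewrite !mxE (_ : (k == i) = false) ?mulr0 ?mul0r //;
    apply/negbTE/eqP => ki; rewrite -ki kL in iNL.
  by case: eqP => // eL; rewrite eL setU11 in iNL.
rewrite (bigD1 i) //= big1 ?addr0 => [|k /andP [_ ki]]; last first.
  by rewrite !mxE (negbTE ki) mulr0 mul0r.
rewrite !mxE eqxx mulr1 ffunE; have [LJ|LJ] := eqVneq (L :\ i) J.
  have <- : i |: J = L by rewrite -LJ setD1K.
  have -> : [set k in i |: J | (k < i)%N] = set0.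
    apply/setP => k; rewrite !inE; case: eqP => [->|_] /=; first by rewrite ltnn.
    by apply/negbTE; rewrite negb_and -leqNgt; case: (boolP (k \in J)) => //= /iJ /ltnW.
  by rewrite cards0 eqxx mul1r.
rewrite mulr0; case: eqP => // eL.
by rewrite eL setU1K // eqxx in LJ.
Qed.

Lemma ext_basis_wedge (I : {set 'I_n}) : e_ I = wedge_cols 1%:M (enum I).
Proof.
have lt_trans : transitive (fun i j : 'I_n => (i < j)%N) by move=> ???; exact: ltn_trans.
have : sorted (fun i j : 'I_n => (i < j)%N) (enum I).
  rewrite /enum_mem -enumT; apply: sorted_filter => //.
  by have := iota_ltn_sorted 0 n; rewrite -val_enum_ord sorted_map.
rewrite -[in e_ I](set_enum I).
elim: (enum I) => [|i r IH] /= sr; first by rewrite set_nil.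
rewrite -IH ?(path_sorted sr) // ext_wedge_basis ?set_cons // => j.
by rewrite inE => jr; move: (order_path_min lt_trans sr) => /allP /(_ _ jr).
Qed.

End ExteriorBasis.

Section SpinorRep.
Variables (K : fieldType) (n : nat) (A : algType K).
Variables (iota : 'rV[K]_n * 'cV[K]_n -> A) (hrel : clifford_rel iota).
Local Notation S := {ffun {set 'I_n} -> K^o}.
Variables (rho : A -> S -> S) (hrho : spinor_rep iota rho).
Local Notation e_ := (ext_basis K).
Implicit Types (x y : A) (s : S).

Lemma rho1 s : rho 1 s = s. Proof. by case: hrho => [[]]. Qed.
Lemma rhoM x y s : rho (x * y) s = rho x (rho y s). Proof. by case: hrho => [[]]. Qed.
Lemma rhoDl x y s : rho (x + y) s = rho x s + rho y s. Proof. by case: hrho => [[]]. Qed.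
Lemma rhoZl k x s : rho (k *: x) s = k *: rho x s. Proof. by case: hrho => [[]]. Qed.
Lemma rho_iota z s : rho (iota z) s = rhoS_gen z s. Proof. by case: hrho. Qed.

Lemma rho_linear x k s1 s2 : rho x (k *: s1 + s2) = k *: rho x s1 + rho x s2.
Proof. by case: hrho => [[]]. Qed.

Lemma rhor0 x : rho x 0 = 0.
Proof.
have := rho_linear x 1 0 0; rewrite !scale1r addr0 => h.
by apply: (addrI (rho x 0)); rewrite addr0 -h.
Qed.

Lemma rhorD x s1 s2 : rho x (s1 + s2) = rho x s1 + rho x s2.
Proof. by have := rho_linear x 1 s1 s2; rewrite !scale1r. Qed.

Lemma rhorZ x k s : rho x (k *: s) = k *: rho x s.
Proof. by rewrite -[k *: s]addr0 rho_linear rhor0 addr0. Qed.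

Lemma rhoNl x s : rho (- x) s = - rho x s.
Proof. by rewrite -scaleN1r rhoZl scaleN1r. Qed.

Lemma rho_alg k s : rho k%:A s = k *: s.
Proof. by rewrite rhoZl rho1. Qed.

Lemma rho_iotaW u s : rho (iota (0, u)) s = ext_wedge u s.
Proof. by rewrite rho_iota /rhoS_gen /= ext_contr0 addr0. Qed.

Lemma rho_iotaWd_vacuum d : rho (iota (d, 0)) (e_ set0) = 0.
Proof. by rewrite rho_iota /rhoS_gen /= ext_wedge0 ext_contr_vacuum addr0. Qed.

Lemma rho_transv_rep_vacuum dl w : pair_ev dl w = 0 ->
  rho (1 + iota (dl, 0) * iota (0, w)) (e_ set0) = e_ set0.
Proof.
move=> dlw0; rewrite rhoDl rho1 (iota_anticommWdW hrel) dlw0 scale0r sub0r rhoNl rhoM.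
by rewrite rho_iotaWd_vacuum rhor0 oppr0 addr0.
Qed.

Lemma rho_scale_rep_vacuum w f t : pair_ev f w = 1 ->
  rho (iota (- (t^-1 *: f), t *: w) * iota (- f, w)) (e_ set0) = - t^-1 *: e_ set0.
Proof.
move=> fw; rewrite rhoM (iota_split hrel (- f)) rhoDl rho_iotaWd_vacuum add0r -rhoM.
rewrite (iota_split hrel (- _)) mulrDl (iotaWZ hrel) -scalerAl (iota_sqW hrel) scaler0 addr0.
rewrite (iota_anticommWdW hrel) rhoDl rhoNl rho_alg rhoM rho_iotaWd_vacuum rhor0 subr0.
by rewrite pair_evNl pair_evZl fw mulr1.
Qed.

Lemma rho_transvs_vacuum fs : all_factors_valid fs -> all (fun F => ~~ is_scale F) fs ->
  rho (factors_rep iota fs) (e_ set0) = e_ set0.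
Proof.
rewrite /factors_rep; elim: fs => [|F fs IH] /=; first by rewrite big_nil rho1.
case=> vF vfs /andP [nF nfs]; rewrite big_cons rhoM IH //.
by case: F vF nF => // dl w /= dlw0 _; exact: rho_transv_rep_vacuum.
Qed.

Lemma rho_eq_ext_power x (g : 'M[K]_n) c :
  (forall u, x * iota (0, u) = iota (0, g *m u) * x) ->
  rho x (e_ set0) = c *: e_ set0 -> forall s, rho x s = c *: ext_power g s.
Proof.
move=> xg xvac.
have rho_wedge u s : rho x (ext_wedge u s) = ext_wedge (g *m u) (rho x s).
  by rewrite -rho_iotaW -rhoM xg rhoM rho_iotaW.
have rho_wedges (r : seq 'I_n) :
    rho x (foldr (fun i acc => ext_wedge (col i 1%:M) acc) (e_ set0) r) =
    c *: foldr (fun i acc => ext_wedge (col i g) acc) (e_ set0) r.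
  by elim: r => //= i r IH; rewrite rho_wedge IH ext_wedgeZ col1 -colE.
move=> s; rewrite {1}(ext_basis_decomp s) (big_morph (rho x) (rhorD x) (rhor0 x)).
rewrite /ext_power scaler_sumr; apply: eq_bigr => I _.
by rewrite rhorZ ext_basis_wedge rho_wedges !scalerA mulrC.
Qed.

End SpinorRep.

Lemma all_factors_valid_cat (K : fieldType) n (fs1 fs2 : seq (hyp_factor K n)) :
  all_factors_valid (fs1 ++ fs2) <-> all_factors_valid fs1 /\ all_factors_valid fs2.
Proof. by elim: fs1 => [|F fs1 IH] /=; [tauto | rewrite IH; tauto]. Qed.

Lemma gen_by_transv_factors (K : fieldType) n (fs : seq (hyp_factor K n)) :
  all_factors_valid fs -> all (fun F => ~~ is_scale F) fs -> gen_by_transv (factors_map fs).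
Proof.
elim: fs => [|F fs IH] /=; first by move=> *; exact: gbt_id.
case=> vF vfs /andP [nF nfs]; apply: gbt_comp (IH vfs nfs).
by case: F vF nF => // dl w /= dlw0 _; exact: gbt_transv.
Qed.

(* The basis vector e_i is [col i P] and its dual e_i^* is [row i (invmx P)]. *)
Section Basis.
Variables (K : fieldType) (n : nat) (P : 'M[K]_n.+1) (hP : P \in unitmx).
Local Notation M := 'M[K]_n.+1.
Local Notation I := 'I_n.+1.

Lemma in_basisM (X Y : M) : in_basis P X *m in_basis P Y = in_basis P (X *m Y).
Proof. by rewrite /in_basis !mulmxA mulmxKV. Qed.

Lemma in_basis_unitmx (X : M) : (in_basis P X \in unitmx) = (X \in unitmx).
Proof. by rewrite /in_basis !unitmx_mul hP unitmx_inv hP andbT. Qed.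

Lemma pair_ev_dual_basis (i j : I) : pair_ev (row j (invmx P)) (col i P) = (j == i)%:R.
Proof.
rewrite /pair_ev rowE colE !mulmxA -(mulmxA _ (invmx P)) mulVmx // mulmx1.
have [->|ji] := eqVneq j i; first by rewrite mul_delta_mx mxE !eqxx.
by rewrite mul_delta_mx_0 // mxE.
Qed.

Lemma in_basis_outer (i j : I) a :
  in_basis P (1%:M + a *: delta_mx i j) = 1%:M + a *: (col i P *m row j (invmx P)).
Proof.
rewrite /in_basis mulmxDr mulmx1 mulmxDl mulmxV // -scalemxAr -scalemxAl.
by rewrite colE rowE -(mul_delta_mx (0 : 'I_1)) !mulmxA.
Qed.

Lemma Levi_elem_transv (i j : I) a : i != j ->
  Levi (elem_transv P i j a) =1 hyp_transv (- a *: row j (invmx P)) (col i P).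
Proof.
move=> ij v; have /negbTE ji : j != i by rewrite eq_sym.
rewrite /elem_transv in_basis_outer (Levi_outer (b := - a)); last first.
  by rewrite pair_ev_dual_basis ji mulr0 addr0 addrN.
by rewrite /hyp_transv pair_evZl scalerA mulrC mulNr scaleNr opprK.
Qed.

Lemma Levi_line_scale (i : I) c : c != 0 ->
  Levi (line_scale P i (c ^+ 2)) =1 sq_scaling (col i P) (row i (invmx P)) c.
Proof.
move=> c0 v; rewrite /line_scale in_basis_outer (Levi_outer (b := c ^- 2 - 1)) //.
by rewrite pair_ev_dual_basis eqxx mulr1; field.
Qed.

Lemma unitmx_elem_transv (i j : I) a : i != j -> elem_transv P i j a \in unitmx.
Proof. by move=> ij; rewrite in_basis_unitmx unitmxE det_elmx ?unitr1. Qed.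

Definition elem_factor (p : I * I * K) : hyp_factor K n.+1 :=
  HTransv (- p.2 *: row p.1.2 (invmx P)) (col p.1.1 P).

Lemma pair_ev_elem_transv (i j : I) a : i != j ->
  pair_ev (- a *: row j (invmx P)) (col i P) = 0.
Proof. by move=> ij; rewrite pair_evZl pair_ev_dual_basis eq_sym (negbTE ij) mulr0. Qed.

Lemma elem_factors_valid s : elem_valid s -> all_factors_valid [seq elem_factor p | p <- s].
Proof.
elim: s => [|[[i j] a] s IH] //= /andP [ij vs].
by split; [exact: pair_ev_elem_transv | exact: IH].
Qed.

Lemma elem_factors_transv s : all (fun F => ~~ is_scale F) [seq elem_factor p | p <- s].
Proof. by elim: s. Qed.

Lemma elem_prodE s : elem_prod P s = in_basis P (elmx_prod s).
Proof.
elim: s => [|p s IH] /=; first by rewrite /in_basis mulmx1 mulmxV.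
by rewrite IH -in_basisM.
Qed.

Lemma unitmx_elem_prod s : elem_valid s -> elem_prod P s \in unitmx.
Proof. by move=> vs; rewrite elem_prodE in_basis_unitmx unitmxE det_elmx_prod ?unitr1. Qed.

Lemma Levi_elem_prod s : elem_valid s ->
  Levi (elem_prod P s) =1 factors_map [seq elem_factor p | p <- s].
Proof.
elim: s => [|p s IH] /=; first by move=> _ v; rewrite Levi1.
case/andP => ij vs v.
by rewrite LeviM ?unitmx_elem_transv ?unitmx_elem_prod //= IH // Levi_elem_transv.
Qed.

Lemma elem_prod_line_scale_decomp (g : M) : g \in unitmx ->
  exists2 s, elem_valid s & g = elem_prod P s *m line_scale P ord0 (\det g).
Proof.
move=> ug; set N := invmx P *m g *m P.
have uN : N \in unitmx by rewrite !unitmx_mul unitmx_inv hP ug.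
have detN : \det N = \det g.
  by rewrite !det_mulmx det_inv mulrAC mulVf ?mul1r // -unitfE -unitmxE.
have [s vs eN] := unitmx_elmx_prod_line_mx uN; exists s => //.
rewrite elem_prodE /line_scale in_basisM -detN -eN.
by rewrite /in_basis /N !mulmxA mulmxV // mul1mx mulmxK.
Qed.

Lemma diag_pair_elem_prod (j : I) (t : K) : j != ord0 -> t != 0 ->
  diag_pair P ord0 j t =
  elem_prod P [:: (j, ord0, t - 1); (ord0, j, 1); (j, ord0, t^-1 - 1); (ord0, j, - t)].
Proof.
move=> j0 t0; rewrite elem_prodE /diag_pair; congr (in_basis P _).
have /negbTE j0F := j0; have /negbTE j0F' : ord0 != j by rewrite eq_sym.
apply/matrixP => r c; rewrite /= mulmx1 !elmxE !mxE.
case: (eqVneq r j) => [->|rj]; last case: (eqVneq r ord0) => [->|r0];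
  (case: (eqVneq c j) => [?|cj]; last case: (eqVneq c ord0) => [?|c0]); subst;
  rewrite ?eqxx ?j0F ?j0F' ?(negbTE rj) ?(negbTE r0) ?(negbTE cj) ?(negbTE c0) /=.
all: by field.
Qed.

Lemma diag_prod1 : diag_prod P ord0 (fun=> 1) = 1%:M.
Proof.
rewrite /diag_prod; elim: [seq _ <- _ | _] => //= j l ->.
by rewrite mulmx1 /diag_pair /in_basis invr1 subrr !scale0r !addr0 mulmx1 mulmxV.
Qed.

Definition levi_factors s (u : K) : seq (hyp_factor K n.+1) :=
  [seq elem_factor p | p <- s] ++ [:: HScale (col ord0 P) (row ord0 (invmx P)) u].

Lemma levi_factors_valid s u : elem_valid s -> u != 0 ->
  all_factors_valid (levi_factors s u).
Proof.
move=> vs u0; apply/all_factors_valid_cat; split; first exact: elem_factors_valid.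
by rewrite /= pair_ev_dual_basis eqxx.
Qed.

Lemma count_scale_levi_factors s u : count (@is_scale K n.+1) (levi_factors s u) = 1%N.
Proof. by rewrite count_cat /=; elim: s. Qed.

Lemma Levi_levi_factors s u : elem_valid s -> u != 0 ->
  Levi (elem_prod P s *m line_scale P ord0 (u ^+ 2)) =1 factors_map (levi_factors s u).
Proof.
move=> vs u0 v; have uL : line_scale P ord0 (u ^+ 2) \in unitmx.
  by rewrite in_basis_unitmx unitmxE det_line_mx unitfE expf_neq0.
rewrite LeviM ?unitmx_elem_prod //= Levi_elem_prod // Levi_line_scale //.
by elim: s {vs} => //= p s ->.
Qed.

Lemma Levi_diag_pair (j : I) t : j != ord0 -> t != 0 ->
  exists fs : seq ('rV[K]_n.+1 * 'cV[K]_n.+1),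
    [/\ size fs = 4%N, all (fun p => pair_ev p.1 p.2 == 0) fs &
         Levi (diag_pair P ord0 j t) =1 factors_map [seq HTransv p.1 p.2 | p <- fs]].
Proof.
move=> j0 t0; have j0' : ord0 != j by rewrite eq_sym.
exists [:: (- (t - 1) *: row ord0 (invmx P), col j P);
           (- 1 *: row j (invmx P), col ord0 P);
           (- (t^-1 - 1) *: row ord0 (invmx P), col j P);
           (- - t *: row j (invmx P), col ord0 P)].
split=> //; first by rewrite /= !pair_ev_elem_transv ?eqxx.
by rewrite diag_pair_elem_prod //; apply: Levi_elem_prod; rewrite /elem_valid /= j0 j0'.
Qed.

End Basis.

Lemma gen_by_transv_Levi (K : fieldType) n (g : 'M[K]_n.+1) :
  g \in unitmx -> \det g = 1 -> gen_by_transv (Levi g).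
Proof.
move=> ug detg; have u1 : (1%:M : 'M[K]_n.+1) \in unitmx := unitmx1 _ _.
have [s vs eg] := elem_prod_line_scale_decomp u1 ug.
suff -> : Levi g = factors_map [seq elem_factor 1%:M p | p <- s].
  by apply: gen_by_transv_factors; [exact: elem_factors_valid | exact: elem_factors_transv].
apply: functional_extensionality; rewrite eg detg /line_scale subrr scale0r addr0.
by rewrite /in_basis mulmx1 invmx1 !mulmx1; exact: Levi_elem_prod.
Qed.

Section SpinorAction.
Variables (K : fieldType) (n : nat) (A : algType K).
Variables (iota : 'rV[K]_n.+1 * 'cV[K]_n.+1 -> A) (hrel : clifford_rel iota).
Variables (rho : A -> {ffun {set 'I_n.+1} -> K^o} -> {ffun {set 'I_n.+1} -> K^o}).
Variables (hrho : spinor_rep iota rho) (P : 'M[K]_n.+1) (hP : P \in unitmx).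

Lemma rho_levi_factors_vacuum s (u : K) : elem_valid s ->
  rho (factors_rep iota (levi_factors P s u)) (ext_basis K set0) = - u^-1 *: ext_basis K set0.
Proof.
move=> vs; rewrite /factors_rep big_cat big_seq1 (rhoM hrho) (rho_scale_rep_vacuum hrel hrho).
  rewrite (rhorZ hrho) -/(factors_rep _ _) (rho_transvs_vacuum hrel hrho) //.
    exact: elem_factors_valid.
  exact: elem_factors_transv.
by rewrite pair_ev_dual_basis // eqxx.
Qed.

Lemma rho_levi_factors g s u : elem_valid s -> u != 0 ->
  Levi g =1 factors_map (levi_factors P s u) ->
  forall x, rho (factors_rep iota (levi_factors P s u)) x = - u^-1 *: ext_power g x.
Proof.
move=> vs u0 Lg; apply: (rho_eq_ext_power hrho); last exact: rho_levi_factors_vacuum.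
move=> v; rewrite (factors_rep_intertw hrel); last exact: levi_factors_valid.
by rewrite -Levi_W Lg.
Qed.

End SpinorAction.

Unset Implicit Arguments. Set Strict Implicit.
Theorem mainTheorem3
  (K : fieldType) (hK : (2%:R : K) != 0) (m : nat)
  (* the Clifford algebra Cl(Hyp(W)) with generator map iota *)
  (A : algType K) (iota : 'rV[K]_(m.+2) * 'cV[K]_(m.+2) -> A)
  (hCl : clifford_universal iota)
  (* Clifford conjugation *)
  (cj : A -> A) (hcj : clifford_conjugation iota cj)
  (* the exterior-model representation rho_S on S = /\ W *)
  (rhoS : A -> {ffun {set 'I_(m.+2)} -> K^o} -> {ffun {set 'I_(m.+2)} -> K^o})
  (hrho : spinor_rep iota rhoS)
  (* a chosen basis e_1, ..., e_n (columns of P) *)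
  (P : 'M[K]_(m.+2)) (hP : P \in unitmx) :
  (* main claim *)
  (forall (g : 'M[K]_(m.+2)) (u : K),
     g \in unitmx -> u != 0 -> \det g = u ^+ 2 ->
     (exists (sA sB : seq ('I_(m.+2) * 'I_(m.+2) * K)) (t : 'I_(m.+2) -> K),
        [/\ elem_valid sA, elem_valid sB,
            (forall j, j != ord0 -> t j != 0) &
            g = elem_prod P sA *m line_scale P ord0 (u ^+ 2)
                  *m diag_prod P ord0 t *m elem_prod P sB])
     /\
     (exists fs : seq (hyp_factor K (m.+2)),
        [/\ all_factors_valid fs,
            count (@is_scale K (m.+2)) fs = 1%N,
            (forall v, Levi g v = factors_map fs v),
            even_unitary iota cj (factors_rep iota fs) &
            (forall s, rhoS (factors_rep iota fs) s = (- u^-1) *: ext_power g s)]))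
  /\
  (* Lambda of the elementary factors *)
  (forall (i j : 'I_(m.+2)) (a : K), i != j ->
     exists dl w, pair_ev dl w = 0 /\
       forall v, Levi (elem_transv P i j a) v = hyp_transv dl w v)
  /\
  (forall (j : 'I_(m.+2)) (t : K), j != ord0 -> t != 0 ->
     exists fs : seq ('rV[K]_(m.+2) * 'cV[K]_(m.+2)),
       [/\ size fs = 4%N, all (fun p => pair_ev p.1 p.2 == 0) fs &
           forall v, Levi (diag_pair P ord0 j t) v =
                     factors_map [seq HTransv p.1 p.2 | p <- fs] v])
  /\
  (forall c : K, c != 0 ->
     exists (w : 'cV[K]_(m.+2)) (f : 'rV[K]_(m.+2)), pair_ev f w = 1 /\
       forall v, Levi (line_scale P ord0 (c ^+ 2)) v = sq_scaling w f c v)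
  /\
  (* consequence: Lambda(SL(W)) lies in the group generated by transvections *)
  (forall g : 'M[K]_(m.+2), g \in unitmx -> \det g = 1 ->
     gen_by_transv (Levi g)).
Proof.
have hrel : clifford_rel iota by case: hCl.
split=> [g u ug u0 detg|].
  have [s vs eg] := elem_prod_line_scale_decomp hP ug; rewrite detg in eg.
  have Lg : Levi g =1 factors_map (levi_factors P s u).
    by rewrite eg; exact: Levi_levi_factors.
  split.
    exists s, [::], (fun=> 1); split=> //; first by move=> *; exact: oner_neq0.
    by rewrite diag_prod1 // mulmx1 /= mulmx1.
  exists (levi_factors P s u); split=> //.
  - exact: levi_factors_valid.
  - exact: count_scale_levi_factors.
  - exact/factors_rep_even_unitary/levi_factors_valid.
  - exact: rho_levi_factors.
split=> [i j a ij|]; first by exists (- a *: row j (invmx P)), (col i P); split;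
  [exact: pair_ev_elem_transv | exact: Levi_elem_transv].
split=> [j t j0 t0|]; first exact: Levi_diag_pair.
split=> [c c0|]; last exact: gen_by_transv_Levi.
exists (col ord0 P), (row ord0 (invmx P)); split; last exact: Levi_line_scale.
by rewrite pair_ev_dual_basis ?eqxx.
Qed.
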